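(* Let $\sigma_0,\sigma_\epsilon>0$ with $\sigma_0\neq\sigma_\epsilon$, $\theta_0\in\mathbb{R}$, prior $\Theta\sim\mathrm{Laplace}(\theta_0,\sigma_0)$, signal $X=\Theta+\epsilon$ with $\epsilon\sim\mathrm{Laplace}(0,\sigma_\epsilon)$ independent of $\Theta$, and let $\theta_1(x)=\mathbb{E}[\Theta\mid X=x]$. Put $x_0=x-\theta_0$ and $x^*=\frac{2/\sigma_0}{1/\sigma_\epsilon^2-1/\sigma_0^2}$. Then as $|x_0|\to\infty$: (i) if $\sigma_0>\sigma_\epsilon$, $\theta_1(x)-\bigl(x-\operatorname{sgn}(x_0)x^*\bigr)\to0$, i.e. $\theta_1-\theta_0\approx x_0-\operatorname{sgn}(x_0)x^*$; (ii) if $\sigma_0<\sigma_\epsilon$, $\theta_1(x)-\theta_0\to-\operatorname{sgn}(x_0)\frac{\sigma_0}{\sigma_\epsilon}x^*$ (a bounded shift).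
   Context: $\mathrm{Laplace}(\mu,s)$ has density $t\mapsto\frac{1}{2s}e^{-|t-\mu|/s}$. The posterior mean is $\theta_1(x)=\frac{\int\theta f_\Theta(\theta)l_\epsilon(x-\theta)d\theta}{\int f_\Theta(\theta)l_\epsilon(x-\theta)d\theta}$. *)

From HB Require Import structures.
From mathcomp Require Import all_boot all_order all_algebra.
From mathcomp Require Import all_classical all_reals all_analysis.
Set Implicit Arguments. Unset Strict Implicit. Unset Printing Implicit Defensive.
Import Order.TTheory GRing.Theory Num.Theory.
Import numFieldNormedType.Exports.
Local Open Scope classical_set_scope.
Local Open Scope ring_scope.

Definition laplace_pdf (R : realType) (mu s : R) (t : R) : R :=
  (2 * s)^-1 * expR (- (`|t - mu| / s)).

Definition posterior_mean (R : realType) (th0 s0 se : R) (x : R) : R :=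
  Rintegral (@lebesgue_measure R) setT
    (fun th => th * laplace_pdf th0 s0 th * laplace_pdf 0 se (x - th))
  / Rintegral (@lebesgue_measure R) setT
    (fun th => laplace_pdf th0 s0 th * laplace_pdf 0 se (x - th)).

Definition xstar (R : realType) (s0 se : R) : R :=
  (2 / s0) / (se ^- 2 - s0 ^- 2).

From HB Require Import structures.
From mathcomp Require Import all_boot all_order all_algebra.
From mathcomp Require Import all_classical all_reals all_analysis.
From mathcomp Require Import measurable_realfun ring lra.
Import Order.TTheory GRing.Theory Num.Theory.
Import numFieldNormedType.Exports.
Local Open Scope classical_set_scope.
Local Open Scope ring_scope.

(* Up to a constant factor, the joint density of (Theta, X) at X = x is the kernel
   K t = exp (- a |t - th0| - b |t - x|) with a = 1/s0 and b = 1/se.  On each of the three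
   intervals cut out by th0 and x, K is the exponential of an affine function, so its mass
   and its first moment about th0 (oriented towards x) are explicit combinations of
   exp (- a d) and exp (- b d), d = |x - th0|; the posterior mean is th0 + sgn (x - th0) m d,
   m being their ratio.  As d grows the slower exponential exp (- min(a, b) d) dominates:
   for a < b, m d = d - x^* + o(1), which gives (i); for a > b, m d tends to the constant
   - (s0/se) x^*, which gives (ii). *)

Section laplace_posterior.
Context {R : realType}.
Notation mu := (@lebesgue_measure R).
Set Implicit Arguments.
Unset Strict Implicit.

Lemma cvgy_comp_shift {T : topologicalType} (f : R -> T) (p : R) (l : set_system T) :
  f x @[x --> +oo] --> l -> f (x - p) @[x --> +oo] --> l.
Proof.
move=> fl; apply: (cvg_comp (fun x => x - p) f) fl.
apply/cvgryPge => A; near=> x; rewrite lerBrDr.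
near: x; apply: nbhs_pinfty_ge; exact: num_real.
Unshelve. all: end_near.
Qed.

Lemma cvgy_comp_scale {T : topologicalType} (f : R -> T) (k : R) (l : set_system T) :
  0 < k -> f x @[x --> +oo] --> l -> f (k * x) @[x --> +oo] --> l.
Proof.
move=> k0 fl; apply: (cvg_comp (fun x => k * x) f) fl.
apply/cvgryPge => A; near=> x.
have : k^-1 * A <= x by near: x; apply: nbhs_pinfty_ge; exact: num_real.
by rewrite ler_pdivrMl.
Unshelve. all: end_near.
Qed.

Lemma cvgy_near_shift (f g : R -> R) (p l : R) :
  (\forall x \near +oo, f x = g (x - p)) -> g d @[d --> +oo] --> l ->
  f x @[x --> +oo] --> l.
Proof.
move=> fg gl; apply: cvg_trans (near_eq_cvg _) (cvgy_comp_shift p gl).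
by apply: filterS fg => x ->.
Qed.

Lemma cvgNy_near_reflect (f g : R -> R) (p l : R) :
  (\forall x \near -oo, f x = g (p - x)) -> g d @[d --> +oo] --> l ->
  f x @[x --> -oo] --> l.
Proof.
move=> fg gl.
have gpl : g (p - x) @[x --> -oo] --> l.
  apply/cvgNy_compNP.
  have -> : (fun x => g (p - x)) \o -%R = (fun x => g (x - - p)).
    by apply/funext => x /=; rewrite !opprK addrC.
  exact: cvgy_comp_shift.
apply: cvg_trans gpl; apply: near_eq_cvg.
by apply: filterS fg => x ->.
Qed.

Lemma cvgy_mulr_expRN : x * expR (- x) @[x --> +oo] --> (0 : R).
Proof.
apply/cvgrPdist_le => e e0; near=> x.
have x0 : 0 < x by near: x; apply: nbhs_pinfty_gt; exact: num_real.
have xe : 2 <= x * e.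
  by rewrite -ler_pdivrMr //; near: x; apply: nbhs_pinfty_ge; exact: num_real.
have := @expR_ge1Dxn R x 1 (ltW x0); rewrite (_ : (2`!)%:R = 2 :> R) // => ex.
rewrite sub0r normrN ger0_norm ?mulr_ge0 ?expR_ge0 ?(ltW x0) //.
rewrite expRN ler_pdivrMr ?expR_gt0 //; nra.
Unshelve. all: end_near.
Qed.

Lemma cvgy_expR_scale (k : R) : 0 < k -> expR (- (k * x)) @[x --> +oo] --> 0.
Proof.
by move=> k0; apply: (cvgy_comp_scale (f := fun x => expR (- x))) => //; exact: cvgr_expR.
Qed.

Lemma cvgy_mulr_expR_scale (k : R) : 0 < k -> x * expR (- (k * x)) @[x --> +oo] --> 0.
Proof.
move=> k0.
have -> : (fun x => x * expR (- (k * x))) = (fun x => k^-1 * ((k * x) * expR (- (k * x)))).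
  by apply/funext => x; rewrite mulrA mulKf ?gt_eqF.
have := cvgMl_tmp (a := k^-1)
  (cvgy_comp_scale (f := fun x => x * expR (- x)) k0 cvgy_mulr_expRN).
by rewrite mulr0; apply.
Qed.

Definition is_Rintegral (D : set (measurableTypeR R)) (f : R -> R) (v : R) :=
  mu.-integrable D (EFin \o f) /\ \int[mu]_(x in D) f x = v.

Lemma eq_is_Rintegral (D : set (measurableTypeR R)) (f g : R -> R) (v : R) : measurable D ->
  (forall x, D x -> f x = g x) -> is_Rintegral D f v -> is_Rintegral D g v.
Proof.
move=> mD fg [fi <-]; split; last by apply: eq_Rintegral => x /set_mem /fg.
by apply: (eq_integrable mD _ _ _ fi) => x /set_mem xD /=; rewrite fg.
Qed.

Lemma is_RintegralZl (D : set (measurableTypeR R)) (f : R -> R) (c v : R) :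
  measurable D -> is_Rintegral D f v -> is_Rintegral D (fun x => c * f x) (c * v).
Proof.
move=> mD [fi <-]; split; last by rewrite RintegralZl.
by apply: (eq_integrable mD _ _ _ (integrableZl mD c fi)) => x _ /=; rewrite EFinM.
Qed.

Lemma is_RintegralD (D : set (measurableTypeR R)) (f g : R -> R) (u v : R) :
  measurable D -> is_Rintegral D f u -> is_Rintegral D g v ->
  is_Rintegral D (fun x => f x + g x) (u + v).
Proof.
move=> mD [fi <-] [gi <-]; split; last by rewrite RintegralD.
by apply: (eq_integrable mD _ _ _ (integrableD mD fi gi)) => x _ /=; rewrite EFinD.
Qed.

Lemma ge0_is_Rintegral (D : set (measurableTypeR R)) (f : R -> R) (v : R) :
  measurable D -> measurable_fun D f -> (forall x, D x -> 0 <= f x) ->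
  (\int[mu]_(x in D) (f x)%:E = v%:E)%E -> is_Rintegral D f v.
Proof.
move=> mD mf f0 fv; split; last by rewrite /Rintegral fv.
apply/integrableP; split; first exact/measurable_EFinP.
under eq_integral => x /set_mem Dx do rewrite /= ger0_norm ?f0 //.
by rewrite fv ltry.
Qed.

Lemma integrable_setU (A B : set (measurableTypeR R)) (f : R -> R) :
  measurable A -> measurable B -> [disjoint A & B] ->
  mu.-integrable A (EFin \o f) -> mu.-integrable B (EFin \o f) ->
  mu.-integrable (A `|` B) (EFin \o f).
Proof.
move=> mA mB AB /integrableP[mfA iA] /integrableP[mfB iB].
apply/integrableP; split; first exact/measurable_funU.
rewrite ge0_integral_setU //; first exact: lte_add_pinfty.
have mfAB := (measurable_funU _ mA mB).2 (conj mfA mfB).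
rewrite (_ : (fun x => _) = EFin \o (Num.norm \o f)) //.
apply/measurable_EFinP; apply: measurableT_comp => //.
exact/measurable_EFinP.
Qed.

Lemma is_Rintegral_setU (A B : set (measurableTypeR R)) (f : R -> R) (u v : R) :
  measurable A -> measurable B -> [disjoint A & B] ->
  is_Rintegral A f u -> is_Rintegral B f v -> is_Rintegral (A `|` B) f (u + v).
Proof.
move=> mA mB AB [fA <-] [fB <-].
have fAB := integrable_setU mA mB AB fA fB.
by split => //; rewrite Rintegral_setU.
Qed.

Lemma is_Rintegral_itv_split (f : R -> R) (p q u v w : R) : p < q ->
  is_Rintegral `]-oo, p] f u -> is_Rintegral `[p, q] f v ->
  is_Rintegral `[q, +oo[ f w -> is_Rintegral setT f (u + v + w).
Proof.
move=> pq hu [fv <-] hw.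
have hv : is_Rintegral `]p, q[ f (\int[mu]_(x in `[p, q]) f x).
  split; first by apply: integrableS fv => //; exact: subset_itv_oo_cc.
  rewrite Rintegral_itv_obnd_cbnd ?Rintegral_itv_bndo_bndc //.
    by apply: integrableS fv => //; exact: subset_itv_co_cc.
  by apply: integrableS fv => //; exact: subset_itv_oo_cc.
have -> : [set: R] = `]-oo, p] `|` `]p, q[ `|` `[q, +oo[.
  apply/seteqP; split => x // _ /=; rewrite !in_itv /= andbT.
  by case: (leP x p) => xp; [left; left | case: (ltP x q) => xq; [left; right | right]].
have dj1 : [disjoint `]-oo, p] & `]p, q[].
  by apply/disj_setPS => x [] /=; rewrite !in_itv /= => xp /andP[px _]; rewrite leNgt px in xp.
have dj2 : [disjoint `]-oo, p] `|` `]p, q[ & `[q, +oo[].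
  apply/disj_setPS => x [] /=; rewrite !in_itv /= andbT => -[xp|/andP[_ xq]] qx.
    by move: (lt_le_trans pq qx); rewrite ltNge xp.
  by move: (lt_le_trans xq qx); rewrite ltxx.
by apply: is_Rintegral_setU => //; [exact: measurableU | exact: is_Rintegral_setU].
Qed.

Definition linexp (a b s p t : R) := (a + b * (t - p)) * expR (s * (t - p)).

Lemma is_derive_linexp (a b s p x : R) :
  is_derive x 1 (linexp a b s p) (linexp (a * s + b) (b * s) s p x).
Proof. by apply: is_derive_eq; rewrite /linexp /GRing.scale /=; ring. Qed.

Lemma continuous_linexp (a b s p : R) : continuous (linexp a b s p).
Proof.
move=> x; apply: differentiable_continuous; apply/derivable1_diffP.
exact: (@ex_derive _ _ _ _ _ _ _ (is_derive_linexp a b s p x)).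
Qed.

Definition linexp_primitive (a b s p : R) := linexp ((a - b / s) / s) (b / s) s p.

Lemma is_derive_linexp_primitive (a b s p x : R) : s != 0 ->
  is_derive x 1 (linexp_primitive a b s p) (linexp a b s p x).
Proof.
by move=> s0; apply: is_derive_eq; rewrite /linexp /GRing.scale /=; field.
Qed.

Lemma measurable_linexp (D : set (measurableTypeR R)) (a b s p : R) :
  measurable_fun D (linexp a b s p).
Proof.
by apply: measurable_funTS; apply: continuous_measurable_fun;
  exact: continuous_linexp.
Qed.

Lemma linexp_cvgy (a b k p : R) : 0 < k -> linexp a b (- k) p t @[t --> +oo] --> 0.
Proof.
move=> k0.
have -> : linexp a b (- k) p = fun t =>
    (fun u => a * expR (- (k * u)) + b * (u * expR (- (k * u)))) (t - p).
  by apply/funext => t; rewrite /linexp mulNr; ring.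
apply: (cvgy_comp_shift (f := fun u => a * expR (- (k * u)) + b * (u * expR (- (k * u))))).
have := cvgD (cvgMl_tmp (a := a) (cvgy_expR_scale k0))
  (cvgMl_tmp (a := b) (cvgy_mulr_expR_scale k0)).
by rewrite !mulr0 addr0; apply.
Qed.

Lemma linexp_tail_integral (a b k p : R) : 0 < k -> 0 <= a -> 0 <= b ->
  (\int[mu]_(x in `[p, +oo[) (linexp a b (- k) p x)%:E = (a / k + b / k ^+ 2)%:E)%E.
Proof.
move=> k0 a0 b0; have Nk0 : - k != 0 by rewrite oppr_eq0 gt_eqF.
rewrite (@ge0_continuous_FTC2y _ _ (linexp_primitive a b (- k) p) _ 0).
- rewrite sub0e -EFinN /linexp_primitive /linexp subrr !mulr0 expR0.
  by congr EFin; field; rewrite gt_eqF.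
- by move=> x px; rewrite mulr_ge0 ?expR_ge0 // addr_ge0 // mulr_ge0 // subr_ge0.
- exact/continuous_subspaceT/continuous_linexp.
- exact: linexp_cvgy.
- by move=> x _; apply: ex_derive; exact: is_derive_linexp_primitive.
- exact/cvg_at_right_filter/continuous_linexp.
- move=> x _; have := is_derive_linexp_primitive a b p x Nk0.
  by rewrite derive1E => ?; rewrite derive_val.
Qed.

Lemma linexp_head_integral (a b k p : R) : 0 < k -> 0 <= a -> b <= 0 ->
  (\int[mu]_(x in `]-oo, p]) (linexp a b k p x)%:E = (a / k - b / k ^+ 2)%:E)%E.
Proof.
move=> k0 a0 b0; rewrite -[in LHS](opprK p) ge0_integration_by_substitutionNy.
- rewrite -mulNr -(linexp_tail_integral (- p) k0 a0) ?oppr_ge0 //.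
  by apply: eq_integral => x _ /=; rewrite /linexp; congr (EFin (_ * expR _)); ring.
- exact/continuous_subspaceT/continuous_linexp.
- move=> x; rewrite opprK in_itv /= => xp.
  by rewrite mulr_ge0 ?expR_ge0 // addr_ge0 // mulr_le0 // subr_le0 ltW.
Qed.

Lemma is_Rintegral_linexp_tail (a b k p : R) : 0 < k ->
  is_Rintegral `[p, +oo[ (linexp a b (- k) p) (a / k + b / k ^+ 2).
Proof.
move=> k0.
have base (a' b' : R) : 0 <= a' -> 0 <= b' ->
    is_Rintegral `[p, +oo[ (linexp a' b' (- k) p) (a' / k + b' / k ^+ 2).
  move=> a0 b0; apply: ge0_is_Rintegral; rewrite ?linexp_tail_integral //.
    exact: measurable_linexp.
  move=> x /=; rewrite in_itv /= andbT => px.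
  by rewrite mulr_ge0 ?expR_ge0 // addr_ge0 // mulr_ge0 // subr_ge0.
have -> : linexp a b (- k) p =
    fun t => a * linexp 1 0 (- k) p t + b * linexp 0 1 (- k) p t.
  by apply/funext => t; rewrite /linexp; ring.
rewrite (_ : a / k + b / k ^+ 2 = a * (1 / k + 0 / k ^+ 2) + b * (0 / k + 1 / k ^+ 2)).
  by apply: is_RintegralD => //; apply: is_RintegralZl => //;
    apply: base; rewrite ?ler01.
by rewrite !mul0r addr0 add0r !mul1r.
Qed.

Lemma is_Rintegral_linexp_head (a b k p : R) : 0 < k ->
  is_Rintegral `]-oo, p] (linexp a b k p) (a / k - b / k ^+ 2).
Proof.
move=> k0.
have base (a' b' : R) : 0 <= a' -> b' <= 0 ->
    is_Rintegral `]-oo, p] (linexp a' b' k p) (a' / k - b' / k ^+ 2).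
  move=> a0 b0; apply: ge0_is_Rintegral; rewrite ?linexp_head_integral //.
    exact: measurable_linexp.
  move=> x /=; rewrite in_itv /= => xp.
  by rewrite mulr_ge0 ?expR_ge0 // addr_ge0 // mulr_le0 // subr_le0.
have -> : linexp a b k p =
    fun t => a * linexp 1 0 k p t + (- b) * linexp 0 (- 1) k p t.
  by apply/funext => t; rewrite /linexp; ring.
rewrite (_ : a / k - b / k ^+ 2 = a * (1 / k - 0 / k ^+ 2) + (- b) * (0 / k - (- 1) / k ^+ 2)).
  by apply: is_RintegralD => //; apply: is_RintegralZl => //;
    apply: base; rewrite ?ler01 ?lerN10.
by rewrite !mul0r subr0 sub0r mulNr opprK !mul1r mulNr.
Qed.

Lemma is_Rintegral_linexp_segment (a b s p q : R) : s != 0 -> p < q ->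
  is_Rintegral `[p, q] (linexp a b s p)
    (linexp_primitive a b s p q - linexp_primitive a b s p p).
Proof.
move=> s0 pq.
have cf : {within `[p, q], continuous (linexp a b s p)}.
  exact/continuous_subspaceT/continuous_linexp.
have cF : continuous (linexp_primitive a b s p) by exact: continuous_linexp.
split; first by apply: continuous_compact_integrable => //; exact: segment_compact.
rewrite /Rintegral (continuous_FTC2 (F := linexp_primitive a b s p) pq cf) //.
- split.
  + by move=> x _; apply: ex_derive; exact: is_derive_linexp_primitive.
  + exact/cvg_at_right_filter/cF.
  + exact/cvg_at_left_filter/cF.
- move=> x _; have := is_derive_linexp_primitive a b p x s0.
  by rewrite derive1E => ?; rewrite derive_val.
Qed.

Definition laplace_kernel (a p b q t : R) := expR (- (a * `|t - p|) - b * `|t - q|).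

Lemma laplace_kernelC (a p b q : R) : laplace_kernel a p b q = laplace_kernel b q a p.
Proof. by apply/funext => t; rewrite /laplace_kernel addrC. Qed.

Lemma laplace_pdf_mul (th0 s0 se x t : R) :
  laplace_pdf th0 s0 t * laplace_pdf 0 se (x - t) =
  (2 * s0)^-1 * (2 * se)^-1 * laplace_kernel s0^-1 th0 se^-1 x t.
Proof.
rewrite /laplace_pdf /laplace_kernel subr0 (distrC x) mulrACA -expRD.
by congr (_ * expR _); ring.
Qed.

Section kernel_pieces.
Variables (a b p q : R).
Hypothesis pq : p <= q.

Lemma laplace_kernel_head t : t <= p ->
  laplace_kernel a p b q t = expR (- (b * (q - p))) * expR ((a + b) * (t - p)).
Proof.
move=> tp; have tq := le_trans tp pq.
rewrite /laplace_kernel -expRD ler0_norm ?subr_le0 // ler0_norm ?subr_le0 //.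
by congr expR; ring.
Qed.

Lemma laplace_kernel_mid t : p <= t -> t <= q ->
  laplace_kernel a p b q t = expR (- (b * (q - p))) * expR ((b - a) * (t - p)).
Proof.
move=> pt tq; rewrite /laplace_kernel -expRD ger0_norm ?subr_ge0 // ler0_norm ?subr_le0 //.
by congr expR; ring.
Qed.

Lemma laplace_kernel_tail t : q <= t ->
  laplace_kernel a p b q t = expR (- (a * (q - p))) * expR (- (a + b) * (t - q)).
Proof.
move=> qt; have pt := le_trans pq qt.
rewrite /laplace_kernel -expRD ger0_norm ?subr_ge0 // ger0_norm ?subr_ge0 //.
by congr expR; ring.
Qed.

End kernel_pieces.

Definition kernel_mass (a b d : R) :=
  expR (- (b * d)) / (a + b) + (expR (- (a * d)) - expR (- (b * d))) / (b - a)
  + expR (- (a * d)) / (a + b).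

Definition kernel_moment (a b d : R) :=
  expR (- (b * d)) * ((b - a)^-2 - (a + b)^-2)
  + expR (- (a * d)) * (d / (b - a) - (b - a)^-2 + d / (a + b) + (a + b)^-2).

Lemma is_Rintegral_laplace_kernel (u v a b p q : R) :
  0 < a -> 0 < b -> a != b -> p < q ->
  is_Rintegral setT (fun t => (u + v * (t - p)) * laplace_kernel a p b q t)
    (u * kernel_mass a b (q - p) + v * kernel_moment a b (q - p)).
Proof.
move=> a0 b0 ab pq; have k0 : 0 < a + b by rewrite addr_gt0.
have cn : b - a != 0 by rewrite subr_eq0 eq_sym.
pose eb := expR (- (b * (q - p))); pose ea := expR (- (a * (q - p))).
have eab : ea = eb * expR ((b - a) * (q - p)) by rewrite -expRD; congr expR; ring.
have head := is_Rintegral_linexp_head (u * eb) (v * eb) p k0.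
have mid := is_Rintegral_linexp_segment (u * eb) (v * eb) cn pq.
have tail := is_Rintegral_linexp_tail (ea * (u + v * (q - p))) (v * ea) q k0.
pose F t := (u + v * (t - p)) * laplace_kernel a p b q t.
have Fh t : t \in `]-oo, p] -> linexp (u * eb) (v * eb) (a + b) p t = F t.
  rewrite in_itv /= => tp.
  by rewrite /F laplace_kernel_head ?(ltW pq) // /linexp -/eb; ring.
have Fm t : t \in `[p, q] -> linexp (u * eb) (v * eb) (b - a) p t = F t.
  rewrite in_itv /= => /andP[pt tq].
  by rewrite /F laplace_kernel_mid // /linexp -/eb; ring.
have Ft t : t \in `[q, +oo[ -> linexp (ea * (u + v * (q - p))) (v * ea) (- (a + b)) q t = F t.
  rewrite in_itv /= andbT => qt.
  by rewrite /F laplace_kernel_tail ?(ltW pq) // /linexp -/ea; ring.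
have [Fi FE] := is_Rintegral_itv_split pq (eq_is_Rintegral (measurable_itv _) Fh head)
  (eq_is_Rintegral (measurable_itv _) Fm mid) (eq_is_Rintegral (measurable_itv _) Ft tail).
split => //; rewrite FE /linexp_primitive /linexp subrr !mulr0 expR0 addr0 mulr1.
rewrite /kernel_mass /kernel_moment -/eb -/ea eab.
by field; rewrite cn gt_eqF.
Qed.

Lemma kernel_mass_gt0 (a b d : R) : 0 < a -> 0 < b -> 0 <= d -> 0 < kernel_mass a b d.
Proof.
move=> a0 b0 d0; rewrite /kernel_mass.
have mid : 0 <= (expR (- (a * d)) - expR (- (b * d))) / (b - a).
  have [ab|ba|->] := ltgtP a b; last by rewrite subrr mul0r.
  - by rewrite divr_ge0 // subr_ge0 ?ler_expR ?lerN2 ?ler_wpM2r // ltW.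
  - rewrite -mulrNN -invrN !opprB.
    by rewrite divr_ge0 // subr_ge0 ?ler_expR ?lerN2 ?ler_wpM2r // ltW.
have k0 : 0 < a + b by rewrite addr_gt0.
have := divr_gt0 (expR_gt0 (- (a * d))) k0; have := divr_gt0 (expR_gt0 (- (b * d))) k0.
lra.
Qed.

Definition kernel_mean_offset (a b d : R) := kernel_moment a b d / kernel_mass a b d.

Lemma laplace_kernel_mean (C a b p q : R) : C != 0 -> 0 < a -> 0 < b -> a != b -> p < q ->
  (\int[mu]_(t in setT) (t * (C * laplace_kernel a p b q t))) /
  (\int[mu]_(t in setT) (C * laplace_kernel a p b q t)) =
  p + kernel_mean_offset a b (q - p).
Proof.
move=> C0 a0 b0 ab pq.
have Z0 : kernel_mass a b (q - p) != 0.
  by rewrite gt_eqF // kernel_mass_gt0 // subr_ge0 ltW.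
have [_ num] := is_RintegralZl C measurableT (is_Rintegral_laplace_kernel p 1 a0 b0 ab pq).
have [_ den] := is_RintegralZl C measurableT (is_Rintegral_laplace_kernel 1 0 a0 b0 ab pq).
rewrite (eq_Rintegral mu (g := fun t => C * ((p + 1 * (t - p)) * laplace_kernel a p b q t)));
  last by move=> t _; ring.
rewrite [X in _ / X](eq_Rintegral mu
  (g := fun t => C * ((1 + 0 * (t - p)) * laplace_kernel a p b q t))); last by move=> t _; ring.
by rewrite num den /kernel_mean_offset; field; rewrite C0 Z0.
Qed.

Lemma kernel_mass_sym (a b d : R) : kernel_mass b a d = kernel_mass a b d.
Proof.
rewrite /kernel_mass (addrC b a) -[a - b]opprB -[_ - expR (- (a * d))]opprB.
by rewrite invrN mulrNN; ring.
Qed.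

Lemma kernel_mean_offset_sym (a b d : R) : 0 < a -> 0 < b -> a != b -> 0 <= d ->
  kernel_mean_offset a b d + kernel_mean_offset b a d = d.
Proof.
move=> a0 b0 ab d0; have Z0 := kernel_mass_gt0 a0 b0 d0.
have k0 : a + b != 0 by rewrite gt_eqF // addr_gt0.
have c0 : b - a != 0 by rewrite subr_eq0 eq_sym.
have sum : kernel_moment a b d + kernel_moment b a d = d * kernel_mass a b d.
  rewrite /kernel_moment /kernel_mass (addrC b a) -[a - b]opprB.
  by field; rewrite k0 c0.
by rewrite /kernel_mean_offset (kernel_mass_sym a b) -mulrDl sum mulfK // gt_eqF.
Qed.

Lemma cvgy_ratio (r s : R -> R) (A0 A1 A2 B0 B1 : R) : B0 != 0 ->
  r x @[x --> +oo] --> 0 -> s x @[x --> +oo] --> 0 ->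
  (A0 + A1 * r x + A2 * s x) / (B0 + B1 * r x) @[x --> +oo] --> A0 / B0.
Proof.
move=> B00 r0 s0.
have num : A0 + A1 * r x + A2 * s x @[x --> +oo] --> A0.
  have := cvgD (cvgD (cvg_cst A0) (cvgMl_tmp (a := A1) r0)) (cvgMl_tmp (a := A2) s0).
  by rewrite !mulr0 !addr0; apply.
have den : B0 + B1 * r x @[x --> +oo] --> B0.
  by have := cvgD (cvg_cst B0) (cvgMl_tmp (a := B1) r0); rewrite mulr0 addr0; apply.
exact: cvgM num (cvgV B00 den).
Qed.

Lemma kernel_mean_offset_sub_cvgy (a b : R) : 0 < a -> a < b ->
  kernel_mean_offset a b d - d @[d --> +oo] --> (a + b)^-1 - (b - a)^-1.
Proof.
move=> a0 ab; have b0 := lt_trans a0 ab.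
have k0 : 0 < a + b by rewrite addr_gt0.
have c0 : 0 < b - a by rewrite subr_gt0.
(* Dividing by the dominant exp (- a d) leaves a ratio of affine functions of
   r d = exp (- (b - a) d) and d * r d. *)
pose A0 := (a + b)^-2 - (b - a)^-2; pose A1 := (b - a)^-2 - (a + b)^-2.
pose A2 := (b - a)^-1 - (a + b)^-1.
pose B0 := (a + b)^-1 + (b - a)^-1; pose B1 := (a + b)^-1 - (b - a)^-1.
have B00 : B0 != 0 by rewrite gt_eqF // addr_gt0 // invr_gt0.
have -> : (a + b)^-1 - (b - a)^-1 = A0 / B0.
  by rewrite /A0 /B0; field; rewrite !gt_eqF ?(addr_gt0 c0 k0).
apply: cvg_trans
  (cvgy_ratio (A0 := A0) A1 A2 B1 B00 (cvgy_expR_scale c0) (cvgy_mulr_expR_scale c0)).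
apply: near_eq_cvg; near=> d.
have d0 : 0 <= d by near: d; apply: nbhs_pinfty_ge; exact: num_real.
have Z0 : kernel_mass a b d != 0 by rewrite gt_eqF // kernel_mass_gt0.
pose r := expR (- ((b - a) * d)); pose u := expR (- (a * d)).
have u0 : u != 0 by rewrite gt_eqF // expR_gt0.
have eb : expR (- (b * d)) = r * u by rewrite -expRD; congr expR; ring.
have Zu : kernel_mass a b d = u * (B0 + B1 * r).
  by rewrite /kernel_mass eb -/u /B0 /B1; field; rewrite !gt_eqF.
have Mu : kernel_moment a b d - d * kernel_mass a b d = u * (A0 + A1 * r + A2 * (d * r)).
  by rewrite /kernel_moment /kernel_mass eb -/u /A0 /A1 /A2; field; rewrite !gt_eqF.
have Y0 : B0 + B1 * r != 0 by move: Z0; rewrite Zu mulf_eq0 negb_or => /andP[].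
rewrite /kernel_mean_offset -/r (_ : _ / _ - d =
    (kernel_moment a b d - d * kernel_mass a b d) / kernel_mass a b d); last by field.
by rewrite Mu Zu -mulf_div divff // mul1r.
Unshelve. all: end_near.
Qed.

Lemma kernel_mean_offset_cvgy (a b : R) : 0 < b -> b < a ->
  kernel_mean_offset a b d @[d --> +oo] --> (a - b)^-1 - (a + b)^-1.
Proof.
move=> b0 ba; have a0 := lt_trans b0 ba.
have -> : (a - b)^-1 - (a + b)^-1 = - ((b + a)^-1 - (a - b)^-1)
  by rewrite opprB (addrC b a).
apply: cvg_trans (cvgN (kernel_mean_offset_sub_cvgy b0 ba)).
apply: near_eq_cvg; near=> d.
have d0 : 0 <= d by near: d; apply: nbhs_pinfty_ge; exact: num_real.
have := kernel_mean_offset_sym a0 b0 (negbT (gt_eqF ba)) d0.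
rewrite fctE; lra.
Unshelve. all: end_near.
Qed.

Lemma posterior_mean_laplace_kernel (th0 s0 se x : R) :
  posterior_mean th0 s0 se x =
  (\int[mu]_(t in setT)
     (t * ((2 * s0)^-1 * (2 * se)^-1 * laplace_kernel s0^-1 th0 se^-1 x t))) /
  (\int[mu]_(t in setT) ((2 * s0)^-1 * (2 * se)^-1 * laplace_kernel s0^-1 th0 se^-1 x t)).
Proof.
by rewrite /posterior_mean; congr (_ / _); apply: eq_Rintegral => t _;
  rewrite -laplace_pdf_mul ?mulrA.
Qed.

Section posterior_mean.
Variables (th0 s0 se : R).
Hypotheses (s0_gt0 : 0 < s0) (se_gt0 : 0 < se) (s0_neq_se : s0 != se).

Let s0_neq0 : s0 != 0. Proof. exact: lt0r_neq0. Qed.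
Let se_neq0 : se != 0. Proof. exact: lt0r_neq0. Qed.
Let sum_neq0 : s0 + se != 0. Proof. by rewrite lt0r_neq0 // addr_gt0. Qed.
Let diff_neq0 : s0 - se != 0. Proof. by rewrite subr_eq0. Qed.

Let inv_s0_gt0 : 0 < s0^-1. Proof. by rewrite invr_gt0. Qed.
Let inv_se_gt0 : 0 < se^-1. Proof. by rewrite invr_gt0. Qed.

Let C_neq0 : (2 * s0)^-1 * (2 * se)^-1 != 0.
Proof. by rewrite mulf_neq0 // invr_eq0 mulf_neq0 // gt_eqF. Qed.

Let inv_neq : s0^-1 != se^-1.
Proof. by rewrite (inj_eq (can_inj (@invrK _))). Qed.

Lemma posterior_mean_gt x : th0 < x ->
  posterior_mean th0 s0 se x = th0 + kernel_mean_offset s0^-1 se^-1 (x - th0).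
Proof.
move=> th0x; rewrite posterior_mean_laplace_kernel laplace_kernel_mean //;
  by rewrite invr_gt0.
Qed.

Lemma posterior_mean_lt x : x < th0 ->
  posterior_mean th0 s0 se x = x + kernel_mean_offset se^-1 s0^-1 (th0 - x).
Proof.
move=> xth0; rewrite posterior_mean_laplace_kernel laplace_kernelC.
by rewrite laplace_kernel_mean // ?invr_gt0 // eq_sym.
Qed.

Lemma xstarE : xstar s0 se = (se^-1 - s0^-1)^-1 - (s0^-1 + se^-1)^-1.
Proof.
rewrite /xstar; field.
by rewrite !mulN1r subr_sqr (addrC se) s0_neq0 se_neq0 sum_neq0 diff_neq0 mulf_neq0.
Qed.

Lemma mul_ratio_xstarE : s0 / se * xstar s0 se = (se^-1 - s0^-1)^-1 + (s0^-1 + se^-1)^-1.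
Proof.
rewrite /xstar; field.
by rewrite !mulN1r subr_sqr (addrC se) s0_neq0 se_neq0 sum_neq0 diff_neq0 mulf_neq0.
Qed.

Let th0_lt : \forall x \near +oo, th0 < x.
Proof. by apply: nbhs_pinfty_gt; exact: num_real. Qed.

Let lt_th0 : \forall x \near -oo, x < th0.
Proof. by apply: nbhs_ninfty_lt; exact: num_real. Qed.

Lemma posterior_mean_cvgy_wide_prior : se < s0 ->
  posterior_mean th0 s0 se x - (x - Num.sg (x - th0) * xstar s0 se) @[x --> +oo] --> 0.
Proof.
move=> se_lt_s0; have ab : s0^-1 < se^-1 by rewrite ltf_pV2 ?posrE.
apply: (cvgy_near_shift (p := th0)
  (g := fun d => kernel_mean_offset s0^-1 se^-1 d - d + xstar s0 se)).
  by apply: filterS th0_lt => x th0x; rewrite posterior_mean_gt // gtr0_sg ?subr_gt0 //; ring.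
have := cvgD (kernel_mean_offset_sub_cvgy inv_s0_gt0 ab) (cvg_cst (xstar s0 se)).
by rewrite xstarE subrKA subrr; apply.
Qed.

Lemma posterior_mean_cvgNy_wide_prior : se < s0 ->
  posterior_mean th0 s0 se x - (x - Num.sg (x - th0) * xstar s0 se) @[x --> -oo] --> 0.
Proof.
move=> se_lt_s0; have ab : s0^-1 < se^-1 by rewrite ltf_pV2 ?posrE.
apply: (cvgNy_near_reflect (p := th0)
  (g := fun d => kernel_mean_offset se^-1 s0^-1 d - xstar s0 se)).
  by apply: filterS lt_th0 => x xth0; rewrite posterior_mean_lt // ltr0_sg ?subr_lt0 //; ring.
have := cvgB (kernel_mean_offset_cvgy inv_s0_gt0 ab) (cvg_cst (xstar s0 se)).
by rewrite xstarE (addrC se^-1 s0^-1) subrr; apply.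
Qed.

Lemma posterior_mean_cvgy_narrow_prior : s0 < se ->
  posterior_mean th0 s0 se x - th0 @[x --> +oo] --> - (s0 / se) * xstar s0 se.
Proof.
move=> s0_lt_se; have ba : se^-1 < s0^-1 by rewrite ltf_pV2 ?posrE.
apply: (cvgy_near_shift (p := th0) (g := kernel_mean_offset s0^-1 se^-1)).
  by apply: filterS th0_lt => x th0x; rewrite posterior_mean_gt //; ring.
rewrite mulNr mul_ratio_xstarE opprD -[se^-1 - s0^-1]opprB invrN opprK.
exact: kernel_mean_offset_cvgy.
Qed.

Lemma posterior_mean_cvgNy_narrow_prior : s0 < se ->
  posterior_mean th0 s0 se x - th0 @[x --> -oo] --> s0 / se * xstar s0 se.
Proof.
move=> s0_lt_se; have ba : se^-1 < s0^-1 by rewrite ltf_pV2 ?posrE.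
apply: (cvgNy_near_reflect (p := th0) (g := fun d => kernel_mean_offset se^-1 s0^-1 d - d)).
  by apply: filterS lt_th0 => x xth0; rewrite posterior_mean_lt //; ring.
have -> : s0 / se * xstar s0 se = (se^-1 + s0^-1)^-1 - (s0^-1 - se^-1)^-1.
  by rewrite mul_ratio_xstarE -[se^-1 - s0^-1]opprB invrN (addrC se^-1 s0^-1) [LHS]addrC.
exact: (kernel_mean_offset_sub_cvgy inv_se_gt0 ba).
Qed.

End posterior_mean.

End laplace_posterior.

Theorem mainTheorem13 (R : realType) (s0 se th0 : R) :
  0 < s0 -> 0 < se -> s0 != se ->
  (s0 > se ->
     (fun x => posterior_mean th0 s0 se x
                 - (x - Num.sg (x - th0) * xstar s0 se)) @ +oo --> 0
  /\ (fun x => posterior_mean th0 s0 se x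
                 - (x - Num.sg (x - th0) * xstar s0 se)) @ -oo --> 0) /\
  (s0 < se ->
     (fun x => posterior_mean th0 s0 se x - th0) @ +oo
        --> - (s0 / se) * xstar s0 se
  /\ (fun x => posterior_mean th0 s0 se x - th0) @ -oo
        --> (s0 / se) * xstar s0 se).
Proof.
move=> s0_gt0 se_gt0 s0_neq_se; split => [se_lt_s0 | s0_lt_se]; split.
- exact: posterior_mean_cvgy_wide_prior.
- exact: posterior_mean_cvgNy_wide_prior.
- exact: posterior_mean_cvgy_narrow_prior.
- exact: posterior_mean_cvgNy_narrow_prior.
Qed.
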